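(* Let $w\in S_n$. The destandardization map $\mathrm{dst}$ is well defined on $\mathrm{PD}(w)$ and satisfies: (1) for $P\in\mathrm{PD}(w)$, $\mathrm{dst}(P)\in\mathrm{QPD}(w)$; (2) for $P\in\mathrm{PD}(w)$, $\mathrm{dst}(P)=P$ if and only if $P\in\mathrm{QPD}(w)$; (3) $\mathrm{dst}:\mathrm{PD}(w)\to\mathrm{QPD}(w)$ is surjective; (4) $\mathrm{dst}:\mathrm{PD}(w)\to\mathrm{QPD}(w)$ is injective if and only if $w(i)<w(i+1)$ for all $i$ with $w^{-1}(1)\le i\le n-1$.
   Context: A pipe dream $P$ is a filling of the cells $(i,j)$, $i,j\ge1$ (row $i$ counted from the top, column $j$ from the left), by crossing tiles (crosses) and elbow tiles, with finitely many crosses. Pipes enter at the left edge of each row (pipe $i$ enters row $i$) and exit at the top edge of some column. $P$ is reduced if no two pipes cross more than once. The reduction $\mathtt{reduct}(P)$ is obtained by replacing, for each pair of pipes, all but the southwestmost cross between them by elbows. The permutation of a reduced pipe dream sends $i$ to the column at whose top pipe $i$ exits; the permutation of any $P$ is that of $\mathtt{reduct}(P)$ (equivalently, the Demazure product convention). $\mathrm{PD}(w)$ is the set of pipe dreams with permutation $w$; for $w\in S_n$ all crosses lie in rows $1,\dots,n-1$. The excess $\mathrm{ex}(P)$ is the number of crosses of $P$ minus that of $\mathtt{reduct}(P)$; the weight $\mathrm{wt}(P)$ is the weak composition (of length $n$ for $w\in S_n$) whose $i$th entry is the number of crosses in row $i$. Destandardization $\mathrm{dst}(P)$: while there exists a row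 $i-1$ ($i\ge2$) that contains at least one cross, has no cross in column $1$, and all of whose crosses lie strictly east of every cross in row $i$ (vacuous if row $i$ is empty), move every cross of row $i-1$ one cell southwest (from $(i-1,j)$ to $(i,j-1)$), merging a moved cross with a cross already occupying the target cell. The result when no such row exists is $\mathrm{dst}(P)$. A pipe dream is quasi-Yamanouchi if, in every row containing a cross, the westmost cross of that row either lies in column $1$ or lies weakly west of some cross in the row immediately below. $\mathrm{QPD}(w)$ is the set of quasi-Yamanouchi pipe dreams in $\mathrm{PD}(w)$. *)

From mathcomp Require Import all_boot all_fingroup.
Set Implicit Arguments. Unset Strict Implicit. Unset Printing Implicit Defensive.

(* A pipe dream: P i j = true iff cell (i,j) (row i from the top, column j
   from the left, both 1-indexed) carries a cross.  Well-formedness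
   (crosses only in cells i,j >= 1, finitely many) is the predicate
   [pd_bounded P N] for some N. *)
Definition pipedream := nat -> nat -> bool.

Definition pd_bounded (P : pipedream) (N : nat) : Prop :=
  forall i j, P i j -> [/\ 1 <= i, 1 <= j, i <= N & j <= N].

(* Reading word: rows top to bottom, each row right to left; the cross at
   (i,j) contributes the letter i+j-1 (simple transposition s_{i+j-1}). *)
Definition rword (P : pipedream) (N : nat) : seq nat :=
  flatten [seq [seq i + j - 1 | j <- [seq j <- rev (iota 1 N) | P i j]]
          | i <- iota 1 N].

(* Permutations of the positive integers as functions nat -> nat. *)
Definition swap_at (a x : nat) : nat :=
  if x == a then a.+1 else if x == a.+1 then a else x.

(* Demazure (0-Hecke) product step: u * s_a if it is length-increasing
   (i.e. u(a) < u(a+1)), else u. *)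
Definition dem_step (u : nat -> nat) (a : nat) : nat -> nat :=
  if u a < u a.+1 then (fun x => u (swap_at a x)) else u.

Definition demazure (s : seq nat) : nat -> nat := foldl dem_step id s.

(* w in S_n viewed as a permutation of {1,2,...} (1-indexed, fixing x > n). *)
Definition permn (n : nat) (w : 'S_n) (x : nat) : nat :=
  match x with
  | 0 => 0
  | x'.+1 => match (insub x' : option 'I_n) with
             | Some i => (w i).+1
             | None => x
             end
  end.

Definition in_PD (n : nat) (w : 'S_n) (P : pipedream) : Prop :=
  exists N, pd_bounded P N /\
    forall x, 1 <= x -> demazure (rword P N) x = permn w x.

Definition quasi_yam (P : pipedream) : Prop :=
  forall i j, P i j -> (forall j', j' < j -> ~~ P i j') ->
    j = 1 \/ exists j', P i.+1 j' /\ j <= j'.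

Definition in_QPD (n : nat) (w : 'S_n) (P : pipedream) : Prop :=
  in_PD w P /\ quasi_yam P.

Definition dst_cond (P : pipedream) (r : nat) : Prop :=
  [/\ exists j, P r j, ~~ P r 1 &
      forall j j', P r j -> P r.+1 j' -> j' < j].

Definition dst_move (P : pipedream) (r : nat) : pipedream :=
  fun i j => if i == r then false
             else if i == r.+1 then P i j || P r j.+1
             else P i j.

Definition dst_step (P Q : pipedream) : Prop :=
  exists r, 1 <= r /\ dst_cond P r /\ Q = dst_move P r.

Inductive dst_steps : pipedream -> pipedream -> Prop :=
| dst_refl P : dst_steps P P
| dst_trans P Q R : dst_step P Q -> dst_steps Q R -> dst_steps P R.

Definition dst_terminal (P : pipedream) : Prop :=
  forall r, 1 <= r -> ~ dst_cond P r.

Definition is_dst (P Q : pipedream) : Prop := dst_steps P Q /\ dst_terminal Q.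

(* A destandardization step does not change the Demazure product of the reading
   word: a moved cross keeps its letter [i + j - 1], row [i - 1] is read just before
   row [i], and its letters are at least those of row [i], so the two rows merge into
   one decreasing word in which a letter may be doubled, which the idempotence
   [s * s = s] of the 0-Hecke product absorbs.  A step lowers the total column weight,
   so the process terminates; steps in distant rows commute and steps in adjacent
   rows can be joined, so by Newman's lemma the result is unique.  No step applies
   exactly when the pipe dream is quasi-Yamanouchi, which gives (1)-(3).
   For (4): right after a step, row [i - 1] is empty and row [i] is not.  Reading the
   word, the preimage of [1] is then at most [i - 1], while the last letter,
   read in row [i] or below, is a descent of [w] at a position [>= w^-1(1)]; so
   without such descents no step ever applies and [dst] is the identity.
   Conversely, in the bottom pipe dream of [w] the row [w^-1(1)] is empty and the row
   of a descent is not; lifting the last cross of the first nonempty row below an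
   empty one gives a second pipe dream with the same destandardization. *)

From mathcomp Require Import all_boot all_fingroup.
From mathcomp Require Import zify.
From Stdlib Require Import FunctionalExtensionality Classical.
Set Implicit Arguments. Unset Strict Implicit. Unset Printing Implicit Defensive.

(** * The Demazure product *)

Lemma swap_atK a : involutive (swap_at a).
Proof.
move=> x; rewrite /swap_at; have [->|xa] := eqVneq x a.
  by rewrite eqxx ifN_eq ?eqxx //; lia.
have [->|xa1] := eqVneq x a.+1; first by rewrite eqxx.
by rewrite (negbTE xa) (negbTE xa1).
Qed.

Lemma swap_at_l a : swap_at a a = a.+1.
Proof. by rewrite /swap_at eqxx. Qed.

Lemma swap_at_r a : swap_at a a.+1 = a.
Proof. by rewrite /swap_at; case: eqP => ?; [lia | rewrite eqxx]. Qed.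

Lemma swap_at_id a x : x != a -> x != a.+1 -> swap_at a x = x.
Proof. by rewrite /swap_at => /negbTE -> /negbTE ->. Qed.

Lemma swap_atSS a x : swap_at a.+1 x.+1 = (swap_at a x).+1.
Proof. by rewrite /swap_at !eqSS; case: (x == a); case: (x == a.+1). Qed.

Lemma swap_at_gt0 a x : 0 < a -> 0 < x -> 0 < swap_at a x.
Proof. by rewrite /swap_at; case: ifP => _ //; case: ifP. Qed.

Lemma dem_step_inj u a : injective u -> injective (dem_step u a).
Proof. by rewrite /dem_step; case: ifP => // _ iu x y /iu /(inv_inj (swap_atK a)). Qed.

Lemma foldl_dem_step_inj s u : injective u -> injective (foldl dem_step u s).
Proof. by elim: s u => //= a s IH u iu; apply/IH/dem_step_inj. Qed.

Lemma dem_step_idem u a : dem_step (dem_step u a) a = dem_step u a.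
Proof.
case ua: (u a < u a.+1); rewrite {2 3}/dem_step ua.
  by rewrite /dem_step swap_at_l swap_at_r ltnNge ltnW.
by rewrite /dem_step ua.
Qed.

Lemma dem_step_descent u a : injective u -> dem_step u a a.+1 < dem_step u a a.
Proof.
move=> iu; rewrite /dem_step; case: ifP => ua; first by rewrite swap_at_l swap_at_r.
by rewrite ltn_neqAle eq_sym (inj_eq iu) leqNgt ua; apply/eqP; lia.
Qed.

Lemma dem_step_swap u a x :
  dem_step u a (if u a < u a.+1 then swap_at a x else x) = u x.
Proof. by rewrite /dem_step; case: ifP => _ //; rewrite swap_atK. Qed.

Lemma dem_step_id u a x : x != a -> x != a.+1 -> dem_step u a x = u x.
Proof. by move=> xa xa1; rewrite /dem_step; case: ifP => _ //; rewrite swap_at_id. Qed.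

Lemma foldl_dem_step_below l u x :
  all (fun a => x < a) l -> foldl dem_step u l x = u x.
Proof.
elim: l u => //= a l IH u /andP[xa xl].
by rewrite IH // dem_step_id //; apply/eqP; lia.
Qed.

Lemma foldl_dem_step_merge (T : seq nat) (p q : pred nat) u : sorted gtn T ->
  (forall a b, a \in T -> b \in T -> p a -> q b -> b <= a) ->
  foldl dem_step u (filter p T ++ filter q T) = foldl dem_step u (filter (predU p q) T).
Proof.
elim: T u => //= x T IH u sT pq.
have T_lt : all (gtn x) T by apply: order_path_min sT => a b c /=; lia.
have pqT a b : a \in T -> b \in T -> p a -> q b -> b <= a.
  by move=> aT bT; apply: pq; rewrite inE ?aT ?bT orbT.
have noP : q x -> forall y, y \in T -> ~~ p y.
  move=> qx y yT; apply/negP => py; move/allP: T_lt => /(_ y yT) /=.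
  by have := pq y x; rewrite inE yT orbT mem_head => /(_ isT isT py qx); lia.
case px: (p x); case qx: (q x) => /=; try by rewrite IH // (path_sorted sT).
all: rewrite (@eq_in_filter _ p pred0 T) ?filter_pred0 /=;
  last by move=> y /(noP qx) /negbTE.
all: rewrite ?dem_step_idem; congr foldl; apply: eq_in_filter => y /(noP qx) /negbTE.
all: by rewrite /= => ->.
Qed.

(** * Reading words *)

Definition row_word (P : pipedream) N i :=
  [seq i + j - 1 | j <- [seq j <- rev (iota 1 N) | P i j]].

Lemma rword_rows P N : rword P N = flatten (map (row_word P N) (iota 1 N)).
Proof. by []. Qed.

Lemma row_word_letters P N i : 1 <= i ->
  row_word P N i = [seq a <- rev (iota i N) | P i (a + 1 - i)].
Proof.
move=> i_gt0; have -> : rev (iota i N) = map (fun j => i + j - 1) (rev (iota 1 N)).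
  rewrite map_rev -{1}(subnK i_gt0) iotaDl; congr rev.
  by apply/eq_in_map => j; rewrite mem_iota; lia.
rewrite filter_map /row_word; congr map; apply: eq_in_filter => j.
by rewrite mem_rev mem_iota => hj /=; congr (P i); lia.
Qed.

Lemma row_word_ge P N i a : a \in row_word P N i -> i <= a.
Proof. by case/mapP => j; rewrite mem_filter mem_rev mem_iota => /andP[_ ?] ->; lia. Qed.

Lemma row_word_sorted P N i : 1 <= i -> sorted gtn (row_word P N i).
Proof.
move=> i_gt0; rewrite row_word_letters //; apply: sorted_filter => [a b c /=|]; first lia.
by rewrite rev_sorted; apply: iota_ltn_sorted.
Qed.

Lemma row_word_nil P N i : (forall j, ~~ P i j) -> row_word P N i = [::].
Proof.
by move=> Pi; rewrite /row_word (eq_filter (a2 := pred0)) ?filter_pred0 // => j; apply/negbTE.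
Qed.

Lemma row_word_ext P Q N i : P i =1 Q i -> row_word P N i = row_word Q N i.
Proof. by move=> PQ; rewrite /row_word (eq_filter PQ). Qed.

Lemma row_word_widen P N M i : pd_bounded P N -> N <= M -> row_word P M i = row_word P N i.
Proof.
move=> bP NM; rewrite /row_word -(subnKC NM) iotaD rev_cat filter_cat.
rewrite (@eq_in_filter _ _ pred0) ?filter_pred0 // => j.
by rewrite mem_rev mem_iota => hj; apply/negbTE/negP => /bP[]; lia.
Qed.

Lemma rword_widen P N M : pd_bounded P N -> N <= M -> rword P M = rword P N.
Proof.
move=> bP NM; rewrite !rword_rows -{1 2}(subnKC NM) iotaD map_cat flatten_cat.
set rest := flatten (map _ (iota (1 + N) _)); have -> : rest = [::].
  have rest0 a : a \notin rest.
    apply/flatten_mapP => -[i]; rewrite mem_iota => hi.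
    rewrite row_word_nil // => j; apply/negP => /bP[]; lia.
  by case: rest rest0 => // a ? /(_ a); rewrite mem_head.
by rewrite cats0 subnKC //; congr flatten; apply: eq_map => i; apply: row_word_widen.
Qed.

Lemma rword_gt0 P N : all (fun a => 0 < a) (rword P N).
Proof. by apply/allP => a /flatten_mapP[i]; rewrite mem_iota => /andP[? _] /row_word_ge; lia. Qed.

(** * A step preserves the Demazure product *)

Lemma dst_move_r P r j : dst_move P r r j = false.
Proof. by rewrite /dst_move eqxx. Qed.

Lemma dst_move_r1 P r j : dst_move P r r.+1 j = P r.+1 j || P r j.+1.
Proof. by rewrite /dst_move eqxx; case: eqP => //; lia. Qed.

Lemma dst_move_id P r i j : i != r -> i != r.+1 -> dst_move P r i j = P i j.
Proof. by rewrite /dst_move => /negbTE -> /negbTE ->. Qed.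

Lemma dst_cond_col_gt1 P r j : dst_cond P r -> P r j -> 0 < j -> 1 < j.
Proof. by case=> _ Pr1 _ Prj; case: j Prj => [|[|]] //; rewrite (negbTE Pr1). Qed.

Lemma dst_move_bounded P N r : pd_bounded P N -> dst_cond P r ->
  pd_bounded (dst_move P r) N.+1.
Proof.
move=> bP cP i j; have [[j0 /bP[_ _ rN _]] _ _] := cP.
have [->|ir] := eqVneq i r; first by rewrite dst_move_r.
have [->|ir1] := eqVneq i r.+1; last by rewrite dst_move_id // => /bP[]; split; lia.
rewrite dst_move_r1 => /orP[/bP[]|Prj]; first by split; lia.
have [? ? ? ?] := bP _ _ Prj; have := dst_cond_col_gt1 cP Prj; split; lia.
Qed.

Lemma rword_split P N r : 1 <= r -> r < N ->
  rword P N = flatten (map (row_word P N) (iota 1 r.-1)) ++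
    (row_word P N r ++ row_word P N r.+1) ++
    flatten (map (row_word P N) (iota r.+2 (N - r.+1))).
Proof.
move=> r_gt0 rN; rewrite rword_rows.
rewrite {2}(_ : N = r.-1 + (N - r.+1).+2) ?iotaD; last lia.
by rewrite add1n prednK //= map_cat flatten_cat /= -catA.
Qed.

Lemma foldl_dst_move_rows P N M r u : pd_bounded P N -> N < M -> 1 <= r -> dst_cond P r ->
  foldl dem_step u (row_word (dst_move P r) M r ++ row_word (dst_move P r) M r.+1) =
  foldl dem_step u (row_word P M r ++ row_word P M r.+1).
Proof.
move=> bP NM r_gt0 [_ Pr1 east].
rewrite row_word_nil /=; last by move=> j; rewrite dst_move_r.
set T := rev (iota r M.+1).
have T_sorted : sorted gtn T by rewrite rev_sorted; apply: iota_ltn_sorted.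
have rowP : row_word P M r = [seq a <- T | P r (a + 1 - r)].
  rewrite row_word_letters // /T -[M.+1]addn1 iotaD rev_cat /=.
  by case: ifP => // /bP[]; lia.
have rowP1 : row_word P M r.+1 = [seq a <- T | P r.+1 (a + 1 - r.+1)].
  rewrite row_word_letters // /T -[M.+1]add1n iotaD rev_cat filter_cat /= addn1.
  by case: ifP => [/bP[]|]; [lia | rewrite cats0].
have rowQ1 : row_word (dst_move P r) M r.+1 =
    [seq a <- T | P r (a + 1 - r) || P r.+1 (a + 1 - r.+1)].
  rewrite row_word_letters // /T -[M.+1]add1n iotaD rev_cat filter_cat /= addn1.
  rewrite subSnn subnn (negbTE Pr1) /=.
  case: ifP => [/bP[]|_]; first lia.
  rewrite cats0; apply: eq_in_filter => a; rewrite mem_rev mem_iota => ra.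
  by rewrite dst_move_r1 orbC; congr (P _ _ || P _ _); lia.
rewrite rowP rowP1 rowQ1 foldl_dem_step_merge //.
move=> a b; rewrite !mem_rev !mem_iota => ra rb pa qb.
by have := east _ _ pa qb; lia.
Qed.

Lemma demazure_dst_move P N r : pd_bounded P N -> 1 <= r -> dst_cond P r ->
  demazure (rword (dst_move P r) N.+1) = demazure (rword P N).
Proof.
move=> bP r_gt0 cP; have [[j0 /bP[_ _ rN _]] _ _] := cP.
rewrite -(rword_widen (M := N.+1) bP) // !(@rword_split _ N.+1 r) //; try lia.
have outside m k : r.+1 < m \/ m + k <= r ->
    flatten (map (row_word (dst_move P r) N.+1) (iota m k)) =
    flatten (map (row_word P N.+1) (iota m k)).
  move=> mk; congr flatten; apply/eq_in_map => i; rewrite mem_iota => ?.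
  by apply: row_word_ext => j; rewrite dst_move_id //; apply/eqP; lia.
rewrite /demazure foldl_cat [RHS]foldl_cat outside; last lia.
rewrite foldl_cat [RHS]foldl_cat outside; last lia.
by rewrite (foldl_dst_move_rows _ bP).
Qed.

Section PipeDreamsOfPermutation.
Variables (n : nat) (w : 'S_n).

Lemma in_PD_bounded P N : pd_bounded P N -> in_PD w P ->
  forall x, 1 <= x -> demazure (rword P N) x = permn w x.
Proof.
move=> bP [N' [bP' wP]] x x_gt0.
rewrite -(rword_widen (M := maxn N N') bP) ?leq_maxl //.
by rewrite (rword_widen bP') ?leq_maxr // wP.
Qed.

Lemma in_PD_dst_move P r : in_PD w P -> 1 <= r -> dst_cond P r -> in_PD w (dst_move P r).
Proof.
move=> [N [bP wP]] r_gt0 cP; exists N.+1; split; first exact: dst_move_bounded.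
by rewrite demazure_dst_move.
Qed.

Lemma in_PD_of_dst_move P N r : pd_bounded P N -> 1 <= r -> dst_cond P r ->
  in_PD w (dst_move P r) -> in_PD w P.
Proof.
move=> bP r_gt0 cP wQ; exists N; split => // x x_gt0.
by rewrite -(demazure_dst_move bP r_gt0 cP) (in_PD_bounded (dst_move_bounded bP cP) wQ).
Qed.

Lemma in_PD_dst_steps P Q : in_PD w P -> dst_steps P Q -> in_PD w Q.
Proof.
move=> wP PQ; elim: PQ wP => // P0 Q0 R0 [r [r_gt0 [cP ->]]] _ IH wP0.
by apply: IH; apply: in_PD_dst_move.
Qed.

End PipeDreamsOfPermutation.

(** * Termination *)

Lemma acc_measure (T : Type) (R : T -> T -> Prop) (inv : T -> Prop) (f : T -> nat) :
  (forall x y, inv x -> R y x -> inv y /\ f y < f x) -> forall x, inv x -> Acc R x.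
Proof.
move=> dec; suff acc m x : inv x -> f x < m -> Acc R x by move=> x /acc; apply.
elim: m x => [//|m IH] x ix fx; constructor=> y /(dec _ _ ix) [iy fy].
by apply: IH iy _; lia.
Qed.

(* A step keeps [i + j] fixed for every cross, so this bound survives steps. *)
Definition antidiag_bounded K (P : pipedream) :=
  forall i j, P i j -> [/\ 1 <= i, 1 <= j & i + j <= K].

Definition row_weight K (P : pipedream) i := \sum_(0 <= j < K) P i j * j.
Definition col_weight K (P : pipedream) := \sum_(0 <= i < K) row_weight K P i.

Lemma antidiag_bounded_dst_move K P r :
  antidiag_bounded K P -> dst_cond P r -> antidiag_bounded K (dst_move P r).
Proof.
move=> bP cP i j; have [->|ir] := eqVneq i r; first by rewrite dst_move_r.
have [->|ir1] := eqVneq i r.+1; last by rewrite dst_move_id // => /bP.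
rewrite dst_move_r1 => /orP[/bP //|Prj].
by have [? ? ?] := bP _ _ Prj; have := dst_cond_col_gt1 cP Prj; split; lia.
Qed.

Lemma sum_lt_pair K r (F G : nat -> nat) : r.+1 < K ->
  (forall i, i != r -> i != r.+1 -> F i = G i) ->
  F r + F r.+1 < G r + G r.+1 ->
  \sum_(0 <= i < K) F i < \sum_(0 <= i < K) G i.
Proof.
move=> rK FG lt_pair.
have split_pair H : \sum_(0 <= i < K) H i =
    \sum_(0 <= i < r) H i + (H r + H r.+1) + \sum_(r.+2 <= i < K) H i.
  rewrite (@big_cat_nat _ _ _ r) //= ?(@big_cat_nat _ _ _ r.+2 r K) //=; try lia.
  by rewrite [\sum_(r <= i < r.+2) _]big_ltn // big_nat1 addnA.
have same m k : r.+1 < m \/ k <= r -> \sum_(m <= i < k) F i = \sum_(m <= i < k) G i.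
  by move=> mk; apply: eq_big_nat => i ?; apply: FG; apply/eqP; lia.
by rewrite !split_pair !same; lia.
Qed.

Lemma col_weight_dst_move K P r : antidiag_bounded K P -> 1 <= r -> dst_cond P r ->
  col_weight K (dst_move P r) < col_weight K P.
Proof.
move=> bP r_gt0 cP; have [[j0 Prj0] _ _] := cP.
have [_ j0_gt0 rj0K] := bP _ _ Prj0; have := dst_cond_col_gt1 cP Prj0 j0_gt0.
case: K bP rj0K => [|K] bP rj0K j0_gt1; first lia.
apply: (sum_lt_pair (r := r)) => [|i ir ir1|]; first lia.
  by apply: eq_big_nat => j _; rewrite dst_move_id.
set S := \sum_(0 <= j < K) P r j.+1 * j.
have rowP : row_weight K.+1 P r = S + \sum_(0 <= j < K) P r j.+1.
  rewrite /row_weight big_nat_recl // muln0 add0n /S -big_split /=.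
  by apply: eq_big_nat => j _; rewrite mulnS; lia.
have row_nonempty : 0 < \sum_(0 <= j < K) P r j.+1.
  rewrite (bigD1_seq j0.-1) /= ?mem_index_iota ?iota_uniq ?prednK ?Prj0 //; lia.
have rowQ : row_weight K.+1 (dst_move P r) r = 0.
  by rewrite /row_weight big1 // => j _; rewrite dst_move_r.
have rowQ1 : row_weight K.+1 (dst_move P r) r.+1 <= row_weight K.+1 P r.+1 + S.
  have -> : S = \sum_(0 <= j < K.+1) P r j.+1 * j.
    rewrite /S big_nat_recr //=; case: (boolP (P r K.+1)) => [/bP[]|_]; first lia.
    by rewrite addn0.
  rewrite /row_weight -big_split /=; apply: leq_sum => j _.
  by rewrite dst_move_r1; case: (P r.+1 j); case: (P r j.+1) => /=; lia.
by rewrite rowQ rowP; lia.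
Qed.

Lemma acc_dst_step K P : antidiag_bounded K P -> Acc (fun Q R => dst_step R Q) P.
Proof.
apply: (acc_measure (f := col_weight K)) => Q R bQ [r [r_gt0 [cQ ->]]].
by split; [apply: antidiag_bounded_dst_move | apply: col_weight_dst_move].
Qed.

(** * Confluence *)

Lemma pipedream_eq (P Q : pipedream) : (forall i j, P i j = Q i j) -> P = Q.
Proof. by move=> PQ; do 2![apply: functional_extensionality => ?]; apply: PQ. Qed.

Definition col0_free (P : pipedream) := forall i, ~~ P i 0.

Lemma col0_free_dst_move P r : col0_free P -> dst_cond P r -> col0_free (dst_move P r).
Proof.
move=> zP [_ Pr1 _] i; have [->|ir] := eqVneq i r; first by rewrite dst_move_r.
have [->|ir1] := eqVneq i r.+1; last by rewrite dst_move_id.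
by rewrite dst_move_r1 (negbTE (zP _)) (negbTE Pr1).
Qed.

Lemma dst_cond_ext P Q r : P r =1 Q r -> P r.+1 =1 Q r.+1 -> dst_cond P r -> dst_cond Q r.
Proof.
move=> PQr PQr1 [[j0 Prj0] Pr1 east]; split; first by exists j0; rewrite -PQr.
  by rewrite -PQr.
by move=> j j'; rewrite -PQr -PQr1; apply: east.
Qed.

Lemma dst_move_comm P r s : r.+1 < s ->
  dst_move (dst_move P r) s = dst_move (dst_move P s) r.
Proof.
move=> rs; apply: pipedream_eq => i j.
have [->|i_s] := eqVneq i s; first by rewrite dst_move_r dst_move_id ?dst_move_r //; apply/eqP; lia.
have [->|i_s1] := eqVneq i s.+1.
  by rewrite dst_move_r1 !(@dst_move_id _ r) ?dst_move_r1 //; apply/eqP; lia.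
have [->|ir] := eqVneq i r; first by rewrite dst_move_r dst_move_id ?dst_move_r //; apply/eqP; lia.
have [->|ir1] := eqVneq i r.+1; last by rewrite !dst_move_id.
by rewrite dst_move_id ?dst_move_r1 ?(@dst_move_id _ s) //; apply/eqP; lia.
Qed.

Lemma dst_step_far P r s : 1 <= r -> 1 <= s -> r.+1 < s -> dst_cond P r -> dst_cond P s ->
  dst_step (dst_move P r) (dst_move (dst_move P r) s) /\
  dst_step (dst_move P s) (dst_move (dst_move P r) s).
Proof.
move=> r_gt0 s_gt0 rs cPr cPs; split.
  exists s; do 2!split => //.
  by apply: (dst_cond_ext _ _ cPs) => j; rewrite dst_move_id //; apply/eqP; lia.
exists r; do 2!split => //; last exact: dst_move_comm.
by apply: (dst_cond_ext _ _ cPr) => j; rewrite dst_move_id //; apply/eqP; lia.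
Qed.

Section AdjacentRows.
Variables (P : pipedream) (r : nat).
Hypotheses (zP : col0_free P) (cPr : dst_cond P r) (cPr1 : dst_cond P r.+1).

Let row_a_gt2 j : P r j -> 2 < j.
Proof.
have [[jb Pb] Pb1 _] := cPr1; have [_ _ east_ab] := cPr.
have jb_gt1 : 1 < jb by case: jb Pb => [|[|]] //; rewrite ?(negbTE (zP _)) ?(negbTE Pb1).
by move=> /east_ab /(_ Pb); lia.
Qed.

Lemma dst_cond_adj_lower : dst_cond (dst_move P r) r.+1.
Proof.
have [[jb Pb] Pb1 east_bc] := cPr1; have [_ _ east_ab] := cPr.
split; first by exists jb; rewrite dst_move_r1 Pb.
  by rewrite dst_move_r1 (negbTE Pb1); apply/negP => /row_a_gt2.
move=> j j'; rewrite dst_move_r1 dst_move_id; try by apply/eqP; lia.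
case/orP=> [Pbj Pc|Pa Pc]; first exact: east_bc Pbj Pc.
by have := east_ab _ _ Pa Pb; have := east_bc _ _ Pb Pc; lia.
Qed.

Lemma dst_cond_adj_upper : dst_cond (dst_move P r.+1) r.
Proof.
have [[ja Pa] Pa1 _] := cPr.
split; first by exists ja; rewrite dst_move_id //; apply/eqP; lia.
  by rewrite dst_move_id //; apply/eqP; lia.
by move=> j j' _; rewrite dst_move_r.
Qed.

Lemma dst_cond_adj_again : dst_cond (dst_move (dst_move P r.+1) r) r.+1.
Proof.
have [[ja Pa] _ east_ab] := cPr; have [_ _ east_bc] := cPr1.
have row_r1 j : dst_move (dst_move P r.+1) r r.+1 j = P r j.+1.
  by rewrite dst_move_r1 dst_move_r dst_move_id //; apply/eqP; lia.
split; first by exists ja.-1; rewrite row_r1 prednK // (ltn_trans _ (row_a_gt2 Pa)).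
  by rewrite row_r1; apply/negP => /row_a_gt2.
move=> j j'; rewrite row_r1 dst_move_id; try by apply/eqP; lia.
rewrite dst_move_r1 => Paj /orP[Pc|Pbj]; last by have := east_ab _ _ Paj Pbj; lia.
have [[jb Pb] _ _] := cPr1.
by have := east_ab _ _ Paj Pb; have := east_bc _ _ Pb Pc; lia.
Qed.

End AdjacentRows.

Lemma dst_move_adj_eq P r :
  dst_move (dst_move (dst_move P r.+1) r) r.+1 = dst_move (dst_move P r) r.+1.
Proof.
apply: pipedream_eq => i j.
have [->|ir1] := eqVneq i r.+1; first by rewrite !dst_move_r.
have [->|ir2] := eqVneq i r.+2.
  rewrite !dst_move_r1 dst_move_r !(@dst_move_id _ r.+1 r) ?(@dst_move_id _ r r.+2);
    try by apply/eqP; lia.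
  by rewrite dst_move_r1 orFb orbA.
have [->|ir] := eqVneq i r.
  by rewrite !(@dst_move_id _ r.+1 r) ?dst_move_r //; apply/eqP; lia.
by rewrite !dst_move_id.
Qed.

Lemma dst_step_steps P Q : dst_step P Q -> dst_steps P Q.
Proof. by move=> PQ; apply: dst_trans PQ (dst_refl _). Qed.

Lemma dst_steps_trans P Q R : dst_steps P Q -> dst_steps Q R -> dst_steps P R.
Proof. by elim=> // P0 Q0 R0 PQ _ IH /IH; apply: dst_trans. Qed.

Lemma dst_local_confluence P Q1 Q2 : col0_free P -> dst_step P Q1 -> dst_step P Q2 ->
  exists2 S, dst_steps Q1 S & dst_steps Q2 S.
Proof.
move=> zP [r [r_gt0 [cPr ->]]] [s [s_gt0 [cPs ->]]].
wlog rs : r s r_gt0 s_gt0 cPr cPs / r < s.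
  move=> sym; have [rs|sr|<-] := ltngtP r s; first exact: sym.
    by have [S ? ?] := sym s r s_gt0 r_gt0 cPs cPr sr; exists S.
  by exists (dst_move P r); apply: dst_refl.
have [s_eq|rs1] := eqVneq s r.+1.
  subst s; exists (dst_move (dst_move P r) r.+1).
    by apply/dst_step_steps; exists r.+1; do 2!split => //; exact: dst_cond_adj_lower zP cPr cPs.
  apply: (@dst_trans _ (dst_move (dst_move P r.+1) r)).
    by exists r; do 2!split => //; exact: dst_cond_adj_upper cPr.
  rewrite -dst_move_adj_eq; apply/dst_step_steps.
  by exists r.+1; do 2!split => //; exact: dst_cond_adj_again zP cPr cPs.
have [step1 step2] : dst_step (dst_move P r) (dst_move (dst_move P r) s) /\
    dst_step (dst_move P s) (dst_move (dst_move P r) s).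
  by apply: dst_step_far => //; lia.
by exists (dst_move (dst_move P r) s); apply: dst_step_steps.
Qed.

Lemma acc_dst_steps P Q :
  Acc (fun Q R => dst_step R Q) P -> dst_steps P Q -> Acc (fun Q R => dst_step R Q) Q.
Proof.
move=> accP PQ; elim: PQ accP => [P0 //|P0 Q0 R0 PQ _ IH accP0].
by apply: IH; apply: Acc_inv accP0 _ PQ.
Qed.

Lemma col0_free_dst_steps P Q : col0_free P -> dst_steps P Q -> col0_free Q.
Proof.
move=> zP PQ; elim: PQ zP => // P0 Q0 R0 [r [_ [cP ->]]] _ IH zP.
by apply/IH/col0_free_dst_move.
Qed.

Lemma dst_stepsP P Q : dst_steps P Q -> P = Q \/ exists2 P1, dst_step P P1 & dst_steps P1 Q.
Proof. by case=> [|P0 P1 Q0 ? ?]; [left | right; exists P1]. Qed.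

Lemma terminal_dst_step P Q : dst_terminal P -> ~ dst_step P Q.
Proof. by move=> tP [r [r_gt0 [cP _]]]; apply: tP r_gt0 cP. Qed.

Lemma is_dst_terminal P Q : dst_terminal P -> is_dst P Q -> Q = P.
Proof. by move=> tP [/dst_stepsP [//|[P1 /(terminal_dst_step tP)]]]. Qed.

Lemma exists_is_dst P : Acc (fun Q R => dst_step R Q) P -> exists Q, is_dst P Q.
Proof.
elim=> {}P _ IH; case: (classic (dst_terminal P)) => [tP|].
  by exists P; split => //; apply: dst_refl.
move=> ntP; apply: NNPP => noQ; apply: ntP => r r_gt0 cP.
have stepP : dst_step P (dst_move P r) by exists r.
have [Q [PQ tQ]] := IH _ stepP; apply: noQ; exists Q.
by split => //; apply: dst_trans stepP PQ.
Qed.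

(* Newman's lemma, by well-founded induction along the steps. *)
Lemma is_dst_unique P : Acc (fun Q R => dst_step R Q) P -> col0_free P ->
  forall Q1 Q2, is_dst P Q1 -> is_dst P Q2 -> Q1 = Q2.
Proof.
elim=> {}P accP IH zP Q1 Q2 [PQ1 tQ1] [PQ2 tQ2].
case: (dst_stepsP PQ1) => [eP|[P1 step1 P1Q1]].
  by subst Q1; rewrite (is_dst_terminal tQ1 (conj PQ2 tQ2)).
case: (dst_stepsP PQ2) => [eP|[P2 step2 P2Q2]].
  by rewrite -eP in tQ2; case: (terminal_dst_step tQ2 step1).
have [S P1S P2S] := dst_local_confluence zP step1 step2.
have [T [ST tT]] := exists_is_dst (acc_dst_steps (accP _ step1) P1S).
have zP1 := col0_free_dst_steps zP (dst_step_steps step1).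
have zP2 := col0_free_dst_steps zP (dst_step_steps step2).
have eQ1 : Q1 = T.
  by apply: (IH _ step1 zP1 _ _ (conj P1Q1 tQ1)); split => //; apply: dst_steps_trans P1S ST.
have eQ2 : Q2 = T.
  by apply: (IH _ step2 zP2 _ _ (conj P2Q2 tQ2)); split => //; apply: dst_steps_trans P2S ST.
by rewrite eQ1 eQ2.
Qed.

(** * Terminal pipe dreams are the quasi-Yamanouchi ones *)

Lemma quasi_yam_terminal P : quasi_yam P -> dst_terminal P.
Proof.
move=> qP r _ [[j0 Prj0] Pr1 east].
have [j Prj jmin] := ex_minnP (ex_intro (fun j => P r j) j0 Prj0).
case: (qP r j Prj) => [j' j'j|j1|[j' [Pr1j' jj']]].
- by apply/negP => /jmin; lia.
- by move: Prj; rewrite j1 (negbTE Pr1).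
by have := east _ _ Prj Pr1j'; lia.
Qed.

Lemma terminal_quasi_yam P :
  col0_free P -> (forall j, ~~ P 0 j) -> dst_terminal P -> quasi_yam P.
Proof.
move=> zP P0 tP i j Pij jmin; have [j1|j_ne1] := eqVneq j 1; first by left.
right; apply: NNPP => noQ.
have i_gt0 : 0 < i by case: i Pij {jmin noQ}; rewrite ?(negbTE (P0 j)).
have j_gt1 : 1 < j by case: j Pij {jmin noQ} j_ne1 => [|[|]] //; rewrite (negbTE (zP i)).
apply: (tP i i_gt0); split; first by exists j.
  by apply/negP => Pi1; have := jmin 1 j_gt1; rewrite Pi1.
move=> j1 j2 Pij1 Pij2; rewrite ltnNge; apply/negP => j1j2; apply: noQ.
exists j2; split => //; apply: leq_trans j1j2.
by rewrite leqNgt; apply/negP => /jmin; rewrite Pij1.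
Qed.

(** * An empty row above a nonempty one forces a descent *)

Section Permn.
Variables (n : nat) (w : 'S_n).

Lemma permnS x : x < n -> exists i : 'I_n, val i = x /\ permn w x.+1 = (w i).+1.
Proof. by move=> xn; rewrite /permn; case: insubP => [i _ <-|/=]; [exists i | rewrite xn]. Qed.

Lemma permn_id x : n < x -> permn w x = x.
Proof. by case: x => //= x nx; case: insubP => [i /= xn _|//]; lia. Qed.

Lemma permn_le x : 1 <= x <= n -> 1 <= permn w x <= n.
Proof.
case: x => //= x xn; case: insubP => [i _ _|/=]; last lia.
by have := ltn_ord (w i); lia.
Qed.

Lemma permn_gt0 x : 1 <= x -> 1 <= permn w x.
Proof. by move=> x_gt0; have [/(conj x_gt0)/andP/permn_le|/permn_id ->] := leqP x n; lia. Qed.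

End Permn.

Lemma permn_descent_lt n (w : 'S_n) x : permn w x.+1 < permn w x -> x < n.
Proof.
move=> desc; rewrite ltnNge; apply/negP => nx.
move: desc; rewrite (@permn_id _ w x.+1) ?ltnS // ltnNge => /negP; apply.
have [xn|/permn_id ->] := leqP x n; last lia.
have {xn nx} -> : x = n by lia.
by case: n w => [|m] w //; have := @permn_le m.+1 w m.+1; lia.
Qed.

Lemma permnK n (w : 'S_n) x : 1 <= x -> permn (w^-1)%g (permn w x) = x.
Proof.
case: x => // x _; have [xn|nx] := ltnP x n.
  have [i [<- ->]] := permnS w xn; have [j [ji ->]] := permnS (w^-1)%g (ltn_ord (w i)).
  by rewrite (val_inj ji) permK.
by rewrite !permn_id // ltnS.
Qed.

Lemma permn_inj n (w : 'S_n) : injective (permn w).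
Proof.
move=> [|x] [|y] //.
- by move=> wy; have := permn_gt0 w (ltn0Sn y); rewrite -wy.
- by move=> wx; have := permn_gt0 w (ltn0Sn x); rewrite wx.
by move=> wxy; rewrite -(permnK w (ltn0Sn x)) wxy permnK.
Qed.

(* Reading decreasing letters [>= i], the preimage of [1] can leave [[1, i]] only
   through a last letter [i], and then it lands on [i + 1]. *)
Lemma dem_row_preimage1 i l : sorted gtn l -> all (leq i) l ->
  forall u x, 1 <= x <= i -> u x = 1 ->
  exists2 x', 1 <= x' <= i.+1 & foldl dem_step u l x' = 1.
Proof.
elim: l => [|a l IH] sl al u x xi ux; first by exists x => //; lia.
case/andP: al => ia il /=.
have l_lt : all (gtn a) l by apply: order_path_min sl => ? ? ? /=; lia.
have := dem_step_swap u a x; rewrite ux; set x1 := (if _ then _ else _) => ux1.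
have [x1i|ix1] := leqP x1 i.
  apply: (IH (path_sorted sl) il _ x1) => //; apply/andP; split=> //.
  by rewrite /x1; case: ifP => _; [apply: swap_at_gt0 | ]; lia.
have xa : x = a.
  move: ix1; rewrite /x1; case: ifP => _; last lia.
  by rewrite /swap_at; case: eqP => [//|_]; case: eqP; lia.
subst x; case: l {IH sl} il l_lt => [|b l] /=; last by case/andP=> ? _ /andP[]; lia.
by exists x1 => //; move: ix1; rewrite /x1; case: ifP => _; rewrite ?swap_at_l; lia.
Qed.

Lemma empty_row_preimage1 P N r : 1 <= r -> (forall j, ~~ P r j) ->
  exists2 x, 1 <= x <= r & demazure (rword P N) x = 1.
Proof.
move=> r_gt0 Pr; suff track m : exists x, [/\ 1 <= x <= m.+1, (r <= m -> x <= r) &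
    foldl dem_step id (flatten (map (row_word P N) (iota 1 m))) x = 1].
  have [x [? xr wx]] := track N; exists x => //.
  by have [/xr|] := leqP r N; lia.
elim: m => [|m [x [xm xr wx]]]; first by exists 1.
rewrite -[m.+1]addn1 iotaD map_cat flatten_cat foldl_cat /= cats0 add1n.
have [mr|rm] := ltnP m.+1 r.
  have row_ge : all (leq m.+1) (row_word P N m.+1) by apply/allP => a /row_word_ge.
  have [x' ? ?] := dem_row_preimage1 (row_word_sorted P N (ltn0Sn m)) row_ge xm wx.
  by exists x'; split => //; lia.
have [mr|m_ne_r] := eqVneq m.+1 r.
  by rewrite mr (row_word_nil N Pr); exists x; split => //; lia.
exists x; split; [lia | lia | rewrite foldl_dem_step_below //].
by apply/allP => a /row_word_ge; lia.
Qed.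

Lemma rword_last P N r : pd_bounded P N -> (exists j, P r.+1 j) ->
  exists s a, rword P N = rcons s a /\ r.+1 <= a.
Proof.
move=> bP [j Pr1j]; have [_ j_gt0 rN jN] := bP _ _ Pr1j.
rewrite rword_rows -{2}(subnKC (ltnW rN)) iotaD map_cat flatten_cat.
set B := flatten (map _ (iota (1 + r) _)).
have B_ge a : a \in B -> r.+1 <= a.
  by case/flatten_mapP => i; rewrite mem_iota => /andP[? _] /row_word_ge; lia.
have : r + j \in B.
  apply/flatten_mapP; exists r.+1; first by rewrite mem_iota; lia.
  by apply/mapP; exists j; [rewrite mem_filter Pr1j mem_rev mem_iota /= | ]; lia.
case/lastP: B B_ge => [//|B' a] B_ge _; exists (flatten (map (row_word P N) (iota 1 r)) ++ B'), a.
by rewrite rcons_cat; split => //; apply: B_ge; rewrite mem_rcons mem_head.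
Qed.

Lemma empty_row_descent n (w : 'S_n) P r : in_PD w P -> 1 <= r ->
  (forall j, ~~ P r j) -> (exists j, P r.+1 j) ->
  exists i, [/\ permn (w^-1)%g 1 <= i, i <= n.-1 & permn w i.+1 < permn w i].
Proof.
move=> [N [bP wP]] r_gt0 Pr Pr1.
have [x /andP[x_gt0 xr] wx] := empty_row_preimage1 N r_gt0 Pr.
have winv1 : permn (w^-1)%g 1 = x by rewrite -wx wP ?permnK.
have [s [a [sa ra]]] := rword_last bP Pr1.
have desc : demazure (rword P N) a.+1 < demazure (rword P N) a.
  by rewrite sa /demazure foldl_rcons; apply/dem_step_descent/foldl_dem_step_inj.
rewrite !wP in desc; try lia.
by exists a; split; [lia | have := permn_descent_lt desc; lia | ].
Qed.

(** * The bottom pipe dream *)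

Definition cycle_up m c x :=
  if x == m then m + c else if (m < x) && (x <= m + c) then x.-1 else x.

Lemma cycle_up_m m c : cycle_up m c m = m + c.
Proof. by rewrite /cycle_up eqxx. Qed.

Lemma cycle_up_in m c x : m < x <= m + c -> cycle_up m c x = x.-1.
Proof. by move=> mx; rewrite /cycle_up mx; case: eqP => //; lia. Qed.

Lemma cycle_up_out m c x : x < m \/ m + c < x -> cycle_up m c x = x.
Proof. by move=> mx; rewrite /cycle_up; case: eqP => [|_]; [lia | case: ifP => //; lia]. Qed.

Lemma demazure_rev_iota m c : demazure (rev (iota m c)) = cycle_up m c.
Proof.
elim: c m => [|c IH] m.
  apply: functional_extensionality => x; have [->|xm] := eqVneq x m.
    by rewrite cycle_up_m addn0.
  by rewrite cycle_up_out //; lia.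
rewrite /= rev_cons /demazure foldl_rcons -/(demazure _) IH.
have asc : cycle_up m.+1 c m < cycle_up m.+1 c m.+1 by rewrite cycle_up_m cycle_up_out; lia.
rewrite /dem_step asc; apply: functional_extensionality => x.
have [->|xm] := eqVneq x m; first by rewrite swap_at_l !cycle_up_m; lia.
have [->|xm1] := eqVneq x m.+1; first by rewrite swap_at_r cycle_up_out ?cycle_up_in //; lia.
rewrite swap_at_id //; have [x_lt|m_lt] := ltnP x m; first by rewrite !cycle_up_out //; lia.
have [x_le|x_gt] := leqP x (m + c.+1); first by rewrite !cycle_up_in //; lia.
by rewrite !cycle_up_out //; lia.
Qed.

Lemma cycle_up1_mono c x y : 2 <= x -> x < y -> cycle_up 1 c x < cycle_up 1 c y.
Proof.
move=> x_ge2 xy; have [xc|cx] := leqP x (1 + c); have [yc|cy] := leqP y (1 + c).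
- by rewrite !cycle_up_in //; lia.
- by rewrite cycle_up_in ?(cycle_up_out (x := y)) //; lia.
- lia.
by rewrite !cycle_up_out //; lia.
Qed.

Lemma cycle_up1_ltn c x y : 2 <= x -> 2 <= y -> (cycle_up 1 c x < cycle_up 1 c y) = (x < y).
Proof.
move=> x_ge2 y_ge2; case: (ltnP x y) => [|yx]; first exact: cycle_up1_mono.
apply/negbTE; rewrite -leqNgt; have [->//|y_ne_x] := eqVneq y x.
by apply/ltnW/cycle_up1_mono; lia.
Qed.

Definition cycle_down1 c y :=
  if y == c.+1 then 1 else if (1 <= y) && (y <= c) then y.+1 else y.

Lemma cycle_down1K c : cancel (cycle_down1 c) (cycle_up 1 c).
Proof.
move=> y; rewrite /cycle_down1; case: eqP => [->|yc]; first by rewrite cycle_up_m.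
case: ifP => [yc'|yc']; first by rewrite cycle_up_in //; lia.
by rewrite cycle_up_out //; lia.
Qed.

Lemma cycle_up1K c : cancel (cycle_up 1 c) (cycle_down1 c).
Proof.
move=> y; have [->|y_ne1] := eqVneq y 1; first by rewrite cycle_up_m /cycle_down1 eqxx.
have [yc|cy] := leqP y (1 + c).
  case: y y_ne1 yc => [|y] y_ne1 yc; first by rewrite cycle_up_out //; lia.
  rewrite cycle_up_in /cycle_down1 /=; last lia.
  by case: eqP; [lia | case: ifP => //; lia].
rewrite cycle_up_out /cycle_down1; last lia.
by case: eqP; [lia | case: ifP => //; lia].
Qed.

Lemma cycle_down1_gt0 c y : 1 <= y -> 1 <= cycle_down1 c y.
Proof. by rewrite /cycle_down1; case: eqP => // _; case: ifP. Qed.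

Lemma cycle_up1_gt0 c y : 1 <= y -> 1 <= cycle_up 1 c y.
Proof.
move=> y_gt0; have [->|y_ne1] := eqVneq y 1; first by rewrite cycle_up_m.
by have [yc|cy] := leqP y (1 + c); [rewrite cycle_up_in | rewrite cycle_up_out]; lia.
Qed.

Definition shiftn (v : nat -> nat) x := if x is x'.+1 then (v x').+1 else 0.

Lemma foldl_dem_step_shift C t v : (forall x y, 2 <= x -> x < y -> C x < C y) ->
  v 0 = 0 -> injective v -> all (leq 1) t ->
  foldl dem_step (fun x => C (shiftn v x)) (map S t) =
  (fun x => C (shiftn (foldl dem_step v t) x)).
Proof.
move=> C_mono; elim: t v => //= a t IH v v0 v_inj /andP[a_gt0 t_gt0].
have v_gt0 x : 0 < x -> 0 < v x.
  by rewrite !lt0n; apply: contra_neq => vx; apply: v_inj; rewrite vx v0.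
have -> : dem_step (fun x => C (shiftn v x)) a.+1 = (fun x => C (shiftn (dem_step v a) x)).
  rewrite /dem_step /=; have [lt|ge] := ltnP (v a) (v a.+1).
    rewrite C_mono; [|have := v_gt0 a|]; try lia.
    by apply: functional_extensionality => -[|x] /=; rewrite ?swap_atSS.
  have ne : v a.+1 != v a by rewrite (inj_eq v_inj); apply/eqP; lia.
  rewrite ltnNge ltnW // C_mono //; have := v_gt0 _ (ltn0Sn a); lia.
apply: IH => //; last exact: dem_step_inj.
by rewrite /dem_step; case: ifP => _ //; rewrite swap_at_id //; apply/eqP; lia.
Qed.

Definition fin_perm (f : nat -> nat) N :=
  [/\ f 0 = 0, (forall x, N < x -> f x = x), injective f &
      forall y, 1 <= y -> exists x, f x = y].

Definition has_inversion (f : nat -> nat) i := exists j, i < j /\ f j < f i.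

Lemma fin_perm_gt0 f N x : fin_perm f N -> 1 <= x -> 1 <= f x.
Proof.
case=> f0 _ f_inj _ x_gt0; rewrite lt0n; apply: contra_neq (_ : x != 0) => [fx|]; last lia.
by apply: f_inj; rewrite fx.
Qed.

Definition cons_row c (P : pipedream) : pipedream :=
  fun i j => if i is i'.+1 then if i' is 0 then (1 <= j) && (j <= c) else P i' j else false.

Lemma rword_cons_row c P N : c <= N.+1 -> pd_bounded P N ->
  rword (cons_row c P) N.+1 = rev (iota 1 c) ++ map S (rword P N).
Proof.
move=> cN bP; rewrite !rword_rows /= -/(iota 2 N); congr cat.
  rewrite row_word_letters // filter_rev -(subnKC cN) iotaD filter_cat.
  rewrite (@eq_in_filter _ _ pred0 (iota (1 + c) _)) ?filter_pred0 ?cats0; last first.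
    by move=> a; rewrite mem_iota /cons_row /= => ?; case: andP => // -[]; lia.
  by congr rev; apply/all_filterP/allP => a; rewrite mem_iota /cons_row /= => ?; apply/andP; lia.
rewrite map_flatten -map_comp -[2]/(1 + 1) iotaDl -map_comp; congr flatten.
apply/eq_in_map => i; rewrite mem_iota => /andP[i_gt0 _] /=.
rewrite -(row_word_widen i bP (leqnSn N)) /row_word -map_comp.
rewrite (@eq_filter _ _ (P i)); last by case: i i_gt0.
by apply: eq_map => j /=; lia.
Qed.

Lemma fin_perm_peel f N : fin_perm f N.+1 -> exists c g,
  [/\ c.+1 = f 1, c <= N, fin_perm g N & forall x, f x.+1 = cycle_up 1 c (g x).+1].
Proof.
move=> pf; have [f0 f_id f_inj f_surj] := pf; have f1_gt0 := fin_perm_gt0 pf (ltnSn 0).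
have f1N : f 1 <= N.+1.
  by rewrite leqNgt; apply/negP => Nf1; have := f_inj _ _ (f_id _ Nf1); lia.
set c := (f 1).-1; have f1 : c.+1 = f 1 by rewrite prednK.
exists c, (fun x => (cycle_down1 c (f x.+1)).-1).
have fS x : f x.+1 = cycle_up 1 c (cycle_down1 c (f x.+1)).-1.+1.
  by rewrite prednK ?cycle_down1K // cycle_down1_gt0 // (fin_perm_gt0 pf).
split; [exact: f1 | lia | split | exact: fS].
- by rewrite -f1 /cycle_down1 eqxx.
- move=> x Nx; rewrite f_id /cycle_down1; last lia.
  by case: eqP; [lia | case: ifP => //; lia].
- by move=> x y /= gxy; apply/succn_inj/f_inj; rewrite fS gxy -fS.
move=> y y_gt0; have [[|x] fx] := f_surj _ (cycle_up1_gt0 c (ltn0Sn y)).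
  by have := cycle_up1_gt0 c (ltn0Sn y); rewrite -fx f0.
by exists x; rewrite /= fx cycle_up1K.
Qed.

Lemma has_inversion_cycle_up1 f g c M i : 1 <= i -> fin_perm g M ->
  (forall x, f x.+1 = cycle_up 1 c (g x).+1) ->
  has_inversion f i.+1 <-> has_inversion g i.
Proof.
move=> i_gt0 pg fg; have g_gt0 x : 1 <= x -> 2 <= (g x).+1 by move/(fin_perm_gt0 pg).
split=> [[[|j] [ij fj]]|[j [ij gj]]] //.
  by exists j; split => //; move: fj; rewrite !fg cycle_up1_ltn ?g_gt0 //; lia.
by exists j.+1; split => //; rewrite !fg cycle_up1_ltn ?g_gt0 //; lia.
Qed.

Lemma has_inversion1 f N : fin_perm f N -> has_inversion f 1 <-> 1 < f 1.
Proof.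
move=> pf; have [f0 _ _ f_surj] := pf; split=> [[j [j_gt1 fj]]|f1_gt1].
  by have := fin_perm_gt0 pf (ltnW j_gt1); lia.
have [[|[|x]] fx] := f_surj 1 (ltnSn 0); [by rewrite f0 in fx | lia |].
by exists x.+2; split => //; rewrite fx.
Qed.

(* Peeling off the first value [f 1] as a top row of [f 1 - 1] crosses. *)
Lemma bottom_pipe_dream N f : fin_perm f N -> exists P, [/\ pd_bounded P N,
  demazure (rword P N) = f & forall i, 1 <= i -> (exists j, P i j) <-> has_inversion f i].
Proof.
elim: N f => [|N IH] f pf.
  have [f0 f_id _ _] := pf; have -> : f = id.
    by apply: functional_extensionality => -[|x] //; apply: f_id.
  exists (fun _ _ => false); split => // i _; split=> [[]//|[j [ij]]] /=; lia.
have [c [g [f1 cN pg fg]]] := fin_perm_peel pf.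
have [Pg [bPg wPg rowsPg]] := IH g pg; have [g0 _ g_inj _] := pg.
exists (cons_row c Pg); split.
- move=> [|[|i]] j //=; first by case/andP; split; lia.
  by case/bPg; split; lia.
- rewrite rword_cons_row //; last lia.
  rewrite /demazure foldl_cat -/(demazure _) demazure_rev_iota.
  have -> : cycle_up 1 c = (fun x => cycle_up 1 c (shiftn id x)).
    by apply: functional_extensionality => -[|x].
  rewrite foldl_dem_step_shift ?rword_gt0 -/(demazure _) ?wPg //; last exact: cycle_up1_mono.
  apply: functional_extensionality => -[|x] /=; last by rewrite fg.
  by rewrite cycle_up_out //; [case: pf | left].
move=> [//|[_|i _]].
  rewrite (has_inversion1 pf) -f1 /cons_row /=; split=> [[j /andP[]]|c_gt0]; first lia.
  by exists 1; apply/andP; lia.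
apply: iff_trans (rowsPg i.+1 _) _ => //.
by apply: iff_sym; apply: has_inversion_cycle_up1 pg fg.
Qed.

Lemma fin_perm_permn n (w : 'S_n) : fin_perm (permn w) n.
Proof.
split=> //; [exact: permn_id | exact: permn_inj |].
move=> y y_gt0; exists (permn (w^-1)%g y).
by have := permnK (w^-1)%g y_gt0; rewrite invgK.
Qed.

(** * Destandardization on [PD(w)] *)

Lemma exists_gap (p : nat -> Prop) a d : ~ p a -> p (a + d) ->
  exists r, [/\ a <= r, ~ p r & p r.+1].
Proof.
elim: d a => [|d IH] a pa; first by rewrite addn0.
case: (classic (p a.+1)) => [pa1 _|npa1]; first by exists a.
by rewrite -addSnnS => /(IH _ npa1) [r [ar ? ?]]; exists r; split => //; lia.
Qed.

Section Injectivity.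
Variables (n : nat) (w : 'S_n).

Lemma in_PD_acc P : in_PD w P -> Acc (fun Q R => dst_step R Q) P.
Proof. by case=> N [bP _]; apply: (@acc_dst_step (N + N)) => i j /bP[]; split; lia. Qed.

Lemma in_PD_col0_free P : in_PD w P -> col0_free P.
Proof. by case=> N [bP _] i; apply/negP => /bP[]. Qed.

Lemma in_PD_row0_free P : in_PD w P -> forall j, ~~ P 0 j.
Proof. by case=> N [bP _] j; apply/negP => /bP[]. Qed.

Lemma in_PD_terminal P :
  (forall i, permn (w^-1)%g 1 <= i -> i <= n.-1 -> permn w i < permn w i.+1) ->
  in_PD w P -> dst_terminal P.
Proof.
move=> no_desc wP r r_gt0 cP; have [[j0 Prj0] _ _] := cP.
have j0_gt0 : 0 < j0 by case: j0 Prj0 => //; rewrite (negbTE (in_PD_col0_free wP r)).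
have row_r1 : exists j, dst_move P r r.+1 j.
  by exists j0.-1; rewrite dst_move_r1 prednK ?Prj0 ?orbT.
have [i [wi i_n desc]] := empty_row_descent (in_PD_dst_move wP r_gt0 cP) r_gt0
  (fun j => negbT (dst_move_r P r j)) row_r1.
by have := no_desc i wi i_n; lia.
Qed.

Lemma lift_last_cross P N r : in_PD w P -> pd_bounded P N -> 1 <= r ->
  (forall j, ~~ P r j) -> (exists j, P r.+1 j) ->
  exists2 P', in_PD w P' & dst_step P' P /\ P' <> P.
Proof.
move=> wP bP r_gt0 Pr Pr1.
have [c Pr1c cmax] := ex_maxnP Pr1 (fun j Pj => let: And4 _ _ _ jN := bP r.+1 j Pj in jN).
have [_ c_gt0 r1N cN] := bP _ _ Pr1c.
pose P' : pipedream := fun i j =>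
  if i == r then j == c.+1 else if i == r.+1 then P i j && (j != c) else P i j.
have r1r : (r.+1 == r) = false by apply/negbTE/eqP; lia.
have cP' : dst_cond P' r.
  split; first by exists c.+1; rewrite /P' eqxx.
    by rewrite /P' eqxx; apply/eqP; lia.
  by move=> j j'; rewrite /P' eqxx r1r eqxx => /eqP -> /andP[/cmax]; lia.
have P'_move : dst_move P' r = P.
  apply: pipedream_eq => i j.
  have [->|ir] := eqVneq i r; first by rewrite dst_move_r (negbTE (Pr j)).
  have [->|ir1] := eqVneq i r.+1; last by rewrite dst_move_id // /P' (negbTE ir) (negbTE ir1).
  rewrite dst_move_r1 /P' !eqxx r1r /= eqSS.
  by case: (eqVneq j c) => [->|_]; rewrite ?Pr1c ?andbT ?orbF ?orbT.
have bP' : pd_bounded P' N.+1.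
  move=> i j; rewrite /P'; case: eqP => [-> /eqP ->|_]; first by split; lia.
  by case: eqP => _; [case/andP => /bP[] | case/bP]; split; lia.
exists P'; first by apply: (in_PD_of_dst_move bP' r_gt0 cP'); rewrite P'_move.
split; first by exists r; rewrite P'_move.
by move=> eP; move: (Pr c.+1); rewrite -eP /P' !eqxx.
Qed.

Lemma descent_bottom_gap i0 : permn (w^-1)%g 1 <= i0 -> permn w i0.+1 < permn w i0 ->
  exists L r, [/\ in_PD w L, pd_bounded L n, 1 <= r, forall j, ~~ L r j & exists j, L r.+1 j].
Proof.
move=> ki0 desc; set k := permn (w^-1)%g 1 in ki0.
have k_gt0 : 1 <= k by apply: permn_gt0.
have wk : permn w k = 1 by have := permnK (w^-1)%g (ltnSn 0); rewrite invgK.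
have [L [bL wL rowsL]] := bottom_pipe_dream (fin_perm_permn w).
have Lk : ~ exists j, L k j.
  by move/(rowsL k k_gt0) => [j [kj]]; rewrite wk; have := @permn_gt0 _ w j; lia.
have Li0 : exists j, L (k + (i0 - k)) j.
  by rewrite subnKC //; apply/(rowsL i0); [lia | exists i0.+1].
have [r [kr Lr Lr1]] := exists_gap (p := fun r => exists j, L r j) Lk Li0.
exists L, r; split => //; [by exists n; split => // x _; rewrite wL | lia |].
by move=> j; apply/negP => Lrj; apply: Lr; exists j.
Qed.

Lemma descent_dst_not_injective i0 : permn (w^-1)%g 1 <= i0 -> permn w i0.+1 < permn w i0 ->
  exists P1 P2 Q, [/\ in_PD w P1, in_PD w P2, is_dst P1 Q, is_dst P2 Q & P1 <> P2].
Proof.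
move=> ki0 desc; have [L [r [wL bL r_gt0 Lr Lr1]]] := descent_bottom_gap ki0 desc.
have [P' wP' [stepP' P'L]] := lift_last_cross wL bL r_gt0 Lr Lr1.
have [Q [LQ tQ]] := exists_is_dst (in_PD_acc wL).
by exists P', L, Q; split => //; split => //; apply: dst_trans stepP' LQ.
Qed.

End Injectivity.

Unset Implicit Arguments.

Theorem mainTheorem2 (n : nat) (w : 'S_n) :
  (forall P, in_PD w P ->
     Acc (fun Q R => dst_step R Q) P /\
     (exists Q, is_dst P Q) /\
     (forall Q1 Q2, is_dst P Q1 -> is_dst P Q2 -> Q1 = Q2)) /\
  (forall P Q, in_PD w P -> is_dst P Q -> in_QPD w Q) /\
  (forall P, in_PD w P -> (is_dst P P <-> in_QPD w P)) /\
  (forall Q, in_QPD w Q -> exists2 P, in_PD w P & is_dst P Q) /\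
  ((forall P1 P2 Q, in_PD w P1 -> in_PD w P2 -> is_dst P1 Q -> is_dst P2 Q ->
                    P1 = P2) <->
   (forall i, permn (w^-1)%g 1 <= i -> i <= n.-1 -> permn w i < permn w i.+1)).
Proof.
have QY_of_terminal P : in_PD w P -> dst_terminal P -> quasi_yam P.
  by move=> wP; apply: terminal_quasi_yam; [exact: in_PD_col0_free wP | exact: in_PD_row0_free wP].
split.
  move=> P wP; split; first exact: in_PD_acc wP.
  split; first exact: exists_is_dst (in_PD_acc wP).
  by apply: is_dst_unique; [exact: in_PD_acc wP | exact: in_PD_col0_free wP].
split.
  move=> P Q wP [PQ tQ]; have wQ := in_PD_dst_steps wP PQ.
  by split; last exact: QY_of_terminal wQ tQ.
split.
  move=> P wP; split=> [[_ tP]|[_ qP]]; first by split; last exact: QY_of_terminal wP tP.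
  by split; [apply: dst_refl | apply: quasi_yam_terminal].
split.
  by move=> Q [wQ qQ]; exists Q => //; split; [apply: dst_refl | apply: quasi_yam_terminal].
split=> [dst_inj i wi _|no_desc P1 P2 Q wP1 wP2 P1Q P2Q].
  have [//|desc|/permn_inj] := ltngtP (permn w i) (permn w i.+1); last lia.
  have [P1 [P2 [Q [wP1 wP2 P1Q P2Q]]]] := descent_dst_not_injective wi desc.
  by case; apply: dst_inj P1Q P2Q.
have tP1 := in_PD_terminal no_desc wP1; have tP2 := in_PD_terminal no_desc wP2.
by rewrite -(is_dst_terminal tP1 P1Q) (is_dst_terminal tP2 P2Q).
Qed.
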